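(* Let $k\ge 3$, $\varepsilon\in[0,\tfrac12)$, and let $b^t=(b^t_0,\dots,b^t_{k-1})$ be the counterclockwise vertices of a convex polygon (consecutive collinear vertices allowed) with $\|b^t_j-b^t_{j+1}\|\le 1$ for all $j$ (indices mod $k$). Define $b^{t+1}=\Phi_\varepsilon(b^t)$ and $b^{t+2}=\Phi_\varepsilon(b^{t+1})$. Then for every $j$, every point $p$ lying in the quadrilateral with corners $b^t_j,b^t_{j+1},b^{t+1}_{j+1},b^{t+1}_j$ or in the quadrilateral with corners $b^{t+1}_j,b^{t+1}_{j+1},b^{t+2}_{j+1},b^{t+2}_j$ satisfies $\|p-b^t_j\|\le 1+\frac{\varepsilon^2}{2}$ and $\|p-b^t_{j+1}\|\le 1+\frac{\varepsilon^2}{2}$.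
   Context: The $\varepsilon$-GtM step is the map $\Phi_\varepsilon\colon(\mathbb{R}^2)^k\to(\mathbb{R}^2)^k$, $(b_0,\dots,b_{k-1})\mapsto(b_0^+,\dots,b_{k-1}^+)$ with $b_j^+=\varepsilon\frac{b_{j-1}+b_{j+1}}{2}+(1-\varepsilon)b_j$, indices modulo $k$. $\|\cdot\|$ is the Euclidean norm. ''Lying in a quadrilateral'' means lying in the closed region it bounds (in particular in the convex hull of its four corners). *)

From mathcomp Require Import all_boot all_order all_algebra.
Set Implicit Arguments. Unset Strict Implicit. Unset Printing Implicit Defensive.
Import Order.TTheory GRing.Theory Num.Theory.
Local Open Scope ring_scope.

Section Geom.
Variable R : rcfType.

Definition pt := (R * R)%type.

Definition padd (a b : pt) : pt := (a.1 + b.1, a.2 + b.2).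
Definition psub (a b : pt) : pt := (a.1 - b.1, a.2 - b.2).
Definition pscale (c : R) (a : pt) : pt := (c * a.1, c * a.2).

Definition enorm (a : pt) : R := Num.sqrt (a.1 ^+ 2 + a.2 ^+ 2).

Definition cross (a b : pt) : R := a.1 * b.2 - a.2 * b.1.

Definition vtx (k : nat) (b : nat -> pt) (j : nat) : pt := b (j %% k)%N.

Definition gtm (eps : R) (k : nat) (b : nat -> pt) : nat -> pt :=
  fun j => padd (pscale (eps / 2) (padd (vtx k b (j + k - 1)%N) (vtx k b j.+1)))
                (pscale (1 - eps) (vtx k b j)).

(* b_0,...,b_{k-1} are the counterclockwise vertices of a convex polygon
   (consecutive collinear vertices allowed): the vertices are pairwise
   distinct, every vertex lies on or to the left of every directed edge
   b_j -> b_{j+1}, and the polygon is non-degenerate (some vertex is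
   strictly to the left of some edge). *)
Definition convex_ccw (k : nat) (b : nat -> pt) : Prop :=
  [/\ (forall i j, (i < k)%N -> (j < k)%N -> i <> j -> vtx k b i <> vtx k b j),
      (forall i j, 0 <= cross (psub (vtx k b j.+1) (vtx k b j)) (psub (vtx k b i) (vtx k b j)))
    & (exists i j, 0 < cross (psub (vtx k b j.+1) (vtx k b j)) (psub (vtx k b i) (vtx k b j)))].

Definition in_quad (p a b c d : pt) : Prop :=
  exists l1 l2 l3 l4 : R,
    [/\ 0 <= l1, 0 <= l2, 0 <= l3 & 0 <= l4] /\ l1 + l2 + l3 + l4 = 1
      /\ p = padd (padd (pscale l1 a) (pscale l2 b)) (padd (pscale l3 c) (pscale l4 d)).

End Geom.

From mathcomp Require Import all_boot all_order all_algebra.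
From mathcomp Require Import ring lra.
Import Order.TTheory GRing.Theory Num.Theory.
Local Open Scope ring_scope.

(* All corners of the two quadrilaterals arise from b_(j-2), ..., b_(j+3) by at most two GtM
   steps, so each corner minus b_j is a nonnegative combination of edge vectors b_(i+1) - b_i,
   each of norm at most 1.  The total weight is at most 1 + eps^2/2, attained by the second
   image of b_(j+1), whose weights are 1 - eps + 3/4 eps^2, eps - 3/4 eps^2 and twice eps^2/4.
   By convexity of the norm the bound extends from the corners to the quadrilaterals, and the
   bound around b_(j+1) follows by reversing the orientation of the polygon. *)

Section PlaneNorm.
Variable R : rcfType.
Implicit Types (a c : pt R) (r : R).

Lemma enorm_psubC a c : enorm (psub a c) = enorm (psub c a).
Proof. by rewrite /enorm /psub /=; congr Num.sqrt; ring. Qed.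

Lemma enorm_psubxx a : enorm (psub a a) = 0.
Proof. by rewrite /enorm /psub /= !subrr expr0n addr0 sqrtr0. Qed.

Lemma enormZ r a : 0 <= r -> enorm (pscale r a) = r * enorm a.
Proof.
move=> r_ge0; rewrite /enorm /pscale /=.
have -> : (r * a.1) ^+ 2 + (r * a.2) ^+ 2 = r ^+ 2 * (a.1 ^+ 2 + a.2 ^+ 2) by ring.
by rewrite sqrtrM ?sqrtr_sqr ?ger0_norm ?sqr_ge0.
Qed.

Lemma enormD_le a c : enorm (padd a c) <= enorm a + enorm c.
Proof.
rewrite /enorm /padd /=.
set A := a.1 ^+ 2 + a.2 ^+ 2; set C := c.1 ^+ 2 + c.2 ^+ 2.
have A_ge0 : 0 <= A by rewrite /A; nra.
have C_ge0 : 0 <= C by rewrite /C; nra.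
have sA_ge0 := sqrtr_ge0 A; have sC_ge0 := sqrtr_ge0 C.
have sA2 := sqr_sqrtr A_ge0; have sC2 := sqr_sqrtr C_ge0.
set sA := Num.sqrt A in sA_ge0 sA2 *; set sC := Num.sqrt C in sC_ge0 sC2 *.
rewrite -[sA + sC]ger0_norm ?addr_ge0 // -sqrtr_sqr ler_sqrt ?sqr_ge0 //.
have lagrange : A * C = (a.1 * c.1 + a.2 * c.2) ^+ 2 + (a.1 * c.2 - a.2 * c.1) ^+ 2.
  by rewrite /A /C; ring.
have cauchy_schwarz : a.1 * c.1 + a.2 * c.2 <= sA * sC.
  have : (a.1 * c.1 + a.2 * c.2) ^+ 2 <= (sA * sC) ^+ 2.
    by rewrite exprMn sA2 sC2 lagrange lerDl sqr_ge0.
  by have := mulr_ge0 sA_ge0 sC_ge0; nra.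
move: sA2 sC2; rewrite /A /C => sA2 sC2; nra.
Qed.

Definition comb4 (c1 c2 c3 c4 : R) (w1 w2 w3 w4 : pt R) : pt R :=
  padd (padd (pscale c1 w1) (pscale c2 w2)) (padd (pscale c3 w3) (pscale c4 w4)).

Lemma enorm_comb4_le (c1 c2 c3 c4 m : R) w1 w2 w3 w4 :
  0 <= c1 -> 0 <= c2 -> 0 <= c3 -> 0 <= c4 ->
  enorm w1 <= m -> enorm w2 <= m -> enorm w3 <= m -> enorm w4 <= m ->
  enorm (comb4 c1 c2 c3 c4 w1 w2 w3 w4) <= (c1 + c2 + c3 + c4) * m.
Proof.
move=> c1_ge0 c2_ge0 c3_ge0 c4_ge0 w1_le w2_le w3_le w4_le.
apply: le_trans (enormD_le _ _) _.
apply: le_trans (lerD (enormD_le _ _) (enormD_le _ _)) _.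
rewrite !enormZ // !mulrDl !addrA.
by do ![apply: lerD | exact: ler_wpM2l].
Qed.

Lemma in_quad_swap p a c d e : in_quad p a c d e -> in_quad p c a e d.
Proof.
move=> [l1 [l2 [l3 [l4 [[? ? ? ?] [l_sum ->]]]]]].
exists l2, l1, l4, l3; split=> //; split; first lra.
by rewrite /padd /pscale /=; congr (_, _); ring.
Qed.

Lemma in_quad_enorm_le p a c d e q (M : R) :
  in_quad p a c d e -> enorm (psub a q) <= M -> enorm (psub c q) <= M ->
  enorm (psub d q) <= M -> enorm (psub e q) <= M -> enorm (psub p q) <= M.
Proof.
move=> [l1 [l2 [l3 [l4 [[l1_ge0 l2_ge0 l3_ge0 l4_ge0] [l_sum ->]]]]]] a_le c_le d_le e_le.
have -> : psub (padd (padd (pscale l1 a) (pscale l2 c)) (padd (pscale l3 d) (pscale l4 e))) q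
    = comb4 l1 l2 l3 l4 (psub a q) (psub c q) (psub d q) (psub e q).
  have -> : l4 = 1 - l1 - l2 - l3 by lra.
  by rewrite /comb4 /psub /padd /pscale /=; congr (_, _); ring.
by rewrite -[M]mul1r -l_sum; apply: enorm_comb4_le.
Qed.

Lemma comb4_unit_le (c1 c2 c3 c4 : R) (w1 w2 w3 w4 v : pt R) (M : R) :
  v = comb4 c1 c2 c3 c4 w1 w2 w3 w4 ->
  0 <= c1 -> 0 <= c2 -> 0 <= c3 -> 0 <= c4 ->
  enorm w1 <= 1 -> enorm w2 <= 1 -> enorm w3 <= 1 -> enorm w4 <= 1 ->
  c1 + c2 + c3 + c4 <= M -> enorm v <= M.
Proof.
move=> -> c1_ge0 c2_ge0 c3_ge0 c4_ge0 w1_le w2_le w3_le w4_le sum_le.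
apply: le_trans sum_le; rewrite -[_ + c4]mulr1.
exact: enorm_comb4_le.
Qed.

End PlaneNorm.

Section GtmStrip.
Variable R : rcfType.
Implicit Types (eps : R) (a c m p : pt R).

Definition gtm_update (eps : R) (a c m : pt R) : pt R :=
  padd (pscale (eps / 2) (padd a c)) (pscale (1 - eps) m).

Lemma gtm_updateC eps a c m : gtm_update eps a c m = gtm_update eps c a m.
Proof. by rewrite /gtm_update /padd /pscale /=; congr (_, _); ring. Qed.

(* The two quadrilaterals swept by the edge x2 x3 in two GtM steps, where x0, ..., x5 stand
   for b_(j-2), ..., b_(j+3). *)
Definition in_gtm_strip (eps : R) (x0 x1 x2 x3 x4 x5 p : pt R) : Prop :=
  let u := gtm_update eps in
  in_quad p x2 x3 (u x2 x4 x3) (u x1 x3 x2) \/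
  in_quad p (u x1 x3 x2) (u x2 x4 x3)
    (u (u x1 x3 x2) (u x3 x5 x4) (u x2 x4 x3)) (u (u x0 x2 x1) (u x2 x4 x3) (u x1 x3 x2)).

Lemma in_gtm_strip_rev eps x0 x1 x2 x3 x4 x5 p :
  in_gtm_strip eps x0 x1 x2 x3 x4 x5 p -> in_gtm_strip eps x5 x4 x3 x2 x1 x0 p.
Proof.
rewrite /in_gtm_strip (gtm_updateC _ x3 x1) (gtm_updateC _ x4 x2).
rewrite (gtm_updateC _ x2 x0) (gtm_updateC _ x5 x3).
set g1 := gtm_update eps x0 x2 x1; set g2 := gtm_update eps x1 x3 x2.
set g3 := gtm_update eps x2 x4 x3; set g4 := gtm_update eps x3 x5 x4.
rewrite (gtm_updateC _ g3 g1) (gtm_updateC _ g4 g2).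
by case=> strip; [left | right]; apply: in_quad_swap.
Qed.

Ltac comb4_identity :=
  rewrite /gtm_update /comb4 /psub /padd /pscale /=; congr (_, _); by field.

Lemma in_gtm_strip_near_left eps x0 x1 x2 x3 x4 x5 p :
  0 <= eps -> eps < 1 / 2 ->
  enorm (psub x0 x1) <= 1 -> enorm (psub x1 x2) <= 1 -> enorm (psub x2 x3) <= 1 ->
  enorm (psub x3 x4) <= 1 -> enorm (psub x4 x5) <= 1 ->
  in_gtm_strip eps x0 x1 x2 x3 x4 x5 p -> enorm (psub p x2) <= 1 + eps ^+ 2 / 2.
Proof.
move=> eps_ge0 eps_lt e01 e12 e23 e34 e45.
have e32 : enorm (psub x3 x2) <= 1 by rewrite enorm_psubC.
have e43 : enorm (psub x4 x3) <= 1 by rewrite enorm_psubC.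
have e54 : enorm (psub x5 x4) <= 1 by rewrite enorm_psubC.
have half_ge0 : 0 <= eps / 2 by lra.
have cohalf_ge0 : 0 <= 1 - eps / 2 by lra.
have sq_ge0 : 0 <= eps ^+ 2 / 4 by rewrite divr_ge0 ?sqr_ge0.
have small_ge0 : 0 <= eps - 3 / 4 * eps ^+ 2 by nra.
have big_ge0 : 0 <= 1 - eps + 3 / 4 * eps ^+ 2 by nra.
have M_ge1 : 1 <= 1 + eps ^+ 2 / 2 by nra.
set M := 1 + eps ^+ 2 / 2 in M_ge1 *.
set u := gtm_update eps.
have x2_near : enorm (psub x2 x2) <= M by rewrite enorm_psubxx; lra.
have x3_near : enorm (psub x3 x2) <= M by lra.
have u3_near : enorm (psub (u x2 x4 x3) x2) <= M.
  apply: (@comb4_unit_le R (eps / 2) (1 - eps / 2) 0 0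
    (psub x4 x3) (psub x3 x2) (psub x3 x2) (psub x3 x2)) => //; first comb4_identity.
  lra.
have u2_near : enorm (psub (u x1 x3 x2) x2) <= M.
  apply: (@comb4_unit_le R (eps / 2) (eps / 2) 0 0
    (psub x1 x2) (psub x3 x2) (psub x3 x2) (psub x3 x2)) => //; first comb4_identity.
  lra.
have uu3_near : enorm (psub (u (u x1 x3 x2) (u x3 x5 x4) (u x2 x4 x3)) x2) <= M.
  apply: (@comb4_unit_le R (1 - eps + 3 / 4 * eps ^+ 2) (eps - 3 / 4 * eps ^+ 2)
    (eps ^+ 2 / 4) (eps ^+ 2 / 4) (psub x3 x2) (psub x4 x3) (psub x5 x4) (psub x1 x2)) => //.
    comb4_identity.
  rewrite /M; lra.
have uu2_near : enorm (psub (u (u x0 x2 x1) (u x2 x4 x3) (u x1 x3 x2)) x2) <= M.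
  apply: (@comb4_unit_le R (eps - 3 / 4 * eps ^+ 2) (eps - 3 / 4 * eps ^+ 2)
    (eps ^+ 2 / 4) (eps ^+ 2 / 4) (psub x3 x2) (psub x1 x2) (psub x4 x3) (psub x0 x1)) => //.
    comb4_identity.
  rewrite /M; nra.
by case=> /in_quad_enorm_le; apply.
Qed.

Lemma in_gtm_strip_near_right eps x0 x1 x2 x3 x4 x5 p :
  0 <= eps -> eps < 1 / 2 ->
  enorm (psub x0 x1) <= 1 -> enorm (psub x1 x2) <= 1 -> enorm (psub x2 x3) <= 1 ->
  enorm (psub x3 x4) <= 1 -> enorm (psub x4 x5) <= 1 ->
  in_gtm_strip eps x0 x1 x2 x3 x4 x5 p -> enorm (psub p x3) <= 1 + eps ^+ 2 / 2.
Proof.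
move=> eps_ge0 eps_lt e01 e12 e23 e34 e45 /in_gtm_strip_rev.
by apply: in_gtm_strip_near_left; rewrite // enorm_psubC.
Qed.

End GtmStrip.

Arguments gtm_update {R}.

Lemma vtx_addk {R : rcfType} k (b : nat -> pt R) n : vtx k b (n + k) = vtx k b n.
Proof. by rewrite /vtx modnDr. Qed.

Lemma vtx_predS {R : rcfType} k (b : nat -> pt R) n :
  (0 < k)%N -> vtx k b (n + k - 1).+1 = vtx k b n.
Proof. by move=> k_gt0; rewrite subn1 prednK ?vtx_addk // addn_gt0 k_gt0 orbT. Qed.

Lemma vtx_Spred {R : rcfType} k (b : nat -> pt R) n :
  (0 < k)%N -> vtx k b (n.+1 + k - 1) = vtx k b n.
Proof. by move=> k_gt0; rewrite addSn subn1 /= vtx_addk. Qed.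

Lemma vtx_gtm {R : rcfType} (eps : R) k b n : (0 < k)%N ->
  vtx k (gtm eps k b) n = gtm_update eps (vtx k b (n + k - 1)) (vtx k b n.+1) (vtx k b n).
Proof.
move=> k_gt0; rewrite /gtm /vtx modn_mod -!addnBA // modnDml.
by rewrite -[(n %% k).+1]addn1 modnDml addn1.
Qed.

Theorem mainTheorem9 (R : rcfType) (k : nat) (eps : R) (b : nat -> pt R) :
  (3 <= k)%N -> 0 <= eps -> eps < 1 / 2 ->
  convex_ccw k b ->
  (forall j, enorm (psub (vtx k b j) (vtx k b j.+1)) <= 1) ->
  let b1 := gtm eps k b in
  let b2 := gtm eps k b1 in
  forall (j : nat) (p : pt R),
    (in_quad p (vtx k b j) (vtx k b j.+1) (vtx k b1 j.+1) (vtx k b1 j)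
     \/ in_quad p (vtx k b1 j) (vtx k b1 j.+1) (vtx k b2 j.+1) (vtx k b2 j)) ->
    enorm (psub p (vtx k b j)) <= 1 + eps ^+ 2 / 2 /\
    enorm (psub p (vtx k b j.+1)) <= 1 + eps ^+ 2 / 2.
Proof.
move=> k_ge3 eps_ge0 eps_lt _ unit_edges b1 b2 j p.
have k_gt0 : (0 < k)%N by apply: leq_trans k_ge3.
rewrite /b2 /b1 !(vtx_gtm eps k (gtm eps k b)) // vtx_Spred //.
rewrite !vtx_gtm // !vtx_Spred // !vtx_predS //.
have edge_pred n : enorm (psub (vtx k b (n + k - 1)) (vtx k b n)) <= 1.
  by rewrite -{1}(vtx_predS k b n k_gt0).
move=> strip; split; move: strip.
  by apply: in_gtm_strip_near_left.
by apply: in_gtm_strip_near_right.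
Qed.
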